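(* Let $T\subseteq\mathbb{R}^n$ be an action set. Then $\mathbf{T}(\mathbf{W}(T))=T$, where $\mathbf{W}(T)=\bigcap_{t\in T}\mathbf{W}(t)$ and $\mathbf{T}(W)=\bigcap_{w\in W}\mathbf{T}(w)$.
   Context: Single-commodity network pricing setting: $G=(\mathcal{V},\mathcal{A})$ directed graph, arc costs $c\ge0$, nonempty tolled arc set $\mathcal{A}_1\subsetneq\mathcal{A}$, $n=|\mathcal{A}_1|$, $N$ node–arc incidence matrix, single origin $o$ and destination $d$ connected by a toll-free path, $b_o=1$, $b_d=-1$, $b_i=0$ otherwise, $\mathcal{X}=\{x\in\mathbb{R}^{\mathcal{A}}: Nx=b,\ x\ge0\}$, $x_{\mathcal{A}_1}$ the restriction of $x$ to $\mathcal{A}_1$; tolls $t\in\mathbb{R}^n$ are extended by zeros to $\bar t\in\mathbb{R}^{\mathcal{A}}$. Let $f(t)=\min\{c^\top x+t^\top x_{\mathcal{A}_1}: x\in\mathcal{X}\}$ for $t\ge0$, $f(t)=-\infty$ otherwise. An action set is a set $T=\{t:(t,z)\in F\text{ for some }z\}$ where $F$ is a face of $\operatorname{epi}(-f)$ whose affine hull's direction space does not contain $(0,1)$. For $t\ge0$, $\mathbf{W}(t)$ is the set of $w$ such that $(w,x)$ is optimal for some $x$ in $\min_{w,x}\{c^\top x+t^\top w: x_{\mathcal{A}_1}\le w,\ Nx=b,\ w\ge0,\ x\ge0\}$. For $w\in\mathbb{R}^n$, $w\ge0$, $\mathbf{T}(w)$ is the set of $t$ that are parts of optimal solutions $(t,y)$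 of $\max_{t,y}\{b^\top y-w^\top t: N^\top y-\bar t\le c,\ t\ge0\}$. *)

From HB Require Import structures.
From mathcomp Require Import all_boot all_order all_algebra.
From mathcomp Require Import all_classical all_reals.
From mathcomp Require Import ereal.
Set Implicit Arguments. Unset Strict Implicit. Unset Printing Implicit Defensive.
Import Order.TTheory GRing.Theory Num.Theory.
Local Open Scope ring_scope.
Local Open Scope classical_set_scope.

Section NetworkPricing.
Context (R : realType) (V A : finType).
Context (ends : A -> V * V) (c : A -> R) (A1 : {set A}) (o d : V).

Definition src (a : A) : V := (ends a).1.
Definition tgt (a : A) : V := (ends a).2.

Fixpoint walk (u : V) (p : seq A) (v : V) : bool :=
  match p with
  | [::] => u == v
  | a :: p' => (src a == u) && walk (tgt a) p' v
  end.

Definition toll_free_path : Prop :=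
  exists p : seq A, all (fun a => a \notin A1) p /\ walk o p d.

Definition incid (i : V) (a : A) : R := (src a == i)%:R - (tgt a == i)%:R.
(* right-hand side b: b_o = 1, b_d = -1, 0 otherwise (o != d assumed) *)
Definition bvec (i : V) : R := (i == o)%:R - (i == d)%:R.

Local Notation n := #|A1|.

(* the i-th tolled arc (enumeration of A1 identifies R^{A1} with R^n) *)
Definition tarc (i : 'I_n) : A := enum_val i.

Definition dotA (u v : A -> R) : R := \sum_(a : A) u a * v a.
Definition dotn (u v : 'rV[R]_n) : R := \sum_(i < n) u 0 i * v 0 i.
Definition nonneg (t : 'rV[R]_n) : Prop := forall i, 0 <= t 0 i.

Definition restr (x : A -> R) : 'rV[R]_n := \row_i x (tarc i).
(* \bar t : extension by zeros of t to all arcs *)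
Definition ext (t : 'rV[R]_n) (a : A) : R := \sum_(i < n | tarc i == a) t 0 i.

Definition Xset : set (A -> R) :=
  [set x | (forall i, \sum_(a : A) incid i a * x a = bvec i) /\ forall a, 0 <= x a].

Definition fval (t : 'rV[R]_n) : \bar R :=
  if `[< nonneg t >] then
    ereal_inf [set ((dotA c x + dotn t (restr x))%:E) | x in Xset]
  else -oo%E.

Definition epi_negf : set ('rV[R]_n * R) :=
  [set p | (- fval p.1 <= p.2%:E)%E].

Definition comb (l : R) (p q : 'rV[R]_n * R) : 'rV[R]_n * R :=
  (l *: p.1 + (1 - l) *: q.1, l * p.2 + (1 - l) * q.2).

Definition convex_set (C : set ('rV[R]_n * R)) : Prop :=
  forall p q l, C p -> C q -> 0 <= l <= 1 -> C (comb l p q).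

Definition face (F C : set ('rV[R]_n * R)) : Prop :=
  [/\ F `<=` C, convex_set F &
      forall p q l, C p -> C q -> 0 < l < 1 -> F (comb l p q) -> F p /\ F q].

Definition aff (F : set ('rV[R]_n * R)) : set ('rV[R]_n * R) :=
  [set p | exists (k : nat) (q : 'I_k -> 'rV[R]_n * R) (l : 'I_k -> R),
     [/\ forall i, F (q i), \sum_(i < k) l i = 1 &
         p = (\sum_(i < k) l i *: (q i).1, \sum_(i < k) l i * (q i).2)]].

Definition aff_dir (F : set ('rV[R]_n * R)) : set ('rV[R]_n * R) :=
  [set v | exists p q, [/\ aff F p, aff F q & v = (p.1 - q.1, p.2 - q.2)]].

Definition action_set (T : set 'rV[R]_n) : Prop :=
  exists F, [/\ face F epi_negf, ~ aff_dir F (0, 1) &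
                T = [set t | exists z, F (t, z)]].

Definition primal_feas (w : 'rV[R]_n) (x : A -> R) : Prop :=
  [/\ Xset x, forall i, x (tarc i) <= w 0 i & nonneg w].
Definition primal_opt (t w : 'rV[R]_n) (x : A -> R) : Prop :=
  primal_feas w x /\
  forall w' x', primal_feas w' x' -> dotA c x + dotn t w <= dotA c x' + dotn t w'.
Definition Wof (t : 'rV[R]_n) : set 'rV[R]_n :=
  [set w | exists x, primal_opt t w x].

Definition dual_feas (t : 'rV[R]_n) (y : V -> R) : Prop :=
  (forall a, \sum_(i : V) incid i a * y i - ext t a <= c a) /\ nonneg t.
Definition dual_opt (w t : 'rV[R]_n) (y : V -> R) : Prop :=
  dual_feas t y /\
  forall t' y', dual_feas t' y' ->
    \sum_(i : V) bvec i * y' i - dotn w t' <= \sum_(i : V) bvec i * y i - dotn w t.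
Definition Tof (w : 'rV[R]_n) : set 'rV[R]_n :=
  [set t | exists y, dual_opt w t y].

Definition WofSet (T : set 'rV[R]_n) : set 'rV[R]_n :=
  [set w | forall t, T t -> Wof t w].
Definition TofSet (W : set 'rV[R]_n) : set 'rV[R]_n :=
  [set t | forall w, W w -> Tof w t].

End NetworkPricing.

From Pilot Require Import Defs.
From HB Require Import structures.
From mathcomp Require Import all_boot all_order all_algebra.
From mathcomp Require Import all_classical all_reals ereal.
From mathcomp Require Import lra ring zify.
Import Order.TTheory GRing.Theory Num.Theory.
Set Implicit Arguments. Unset Strict Implicit. Unset Printing Implicit Defensive.
Local Open Scope ring_scope.
Local Open Scope classical_set_scope.

(* For tolls t >= 0, f(t) is the cost of a shortest o-d path for the arc lengths
   c + \bar t, and the distances to d form an optimal dual solution; so f is a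
   minimum of finitely many affine functions of t.  A face F of epi(-f) with no
   vertical direction is the graph of -f over T, and f is affine on T.  Choose t* in
   T minimising the number of optimal paths plus the number of zero tolls; then every
   path optimal at t* is optimal on all of T and every toll vanishing at t* vanishes
   on all of T.  Let w* be the restriction to A1 of the average of the optimal path
   flows at t*, plus the indicator of the zero tolls of t*.  Complementary slackness
   puts w* in W(t) for every t in T.  Conversely, if t is dual optimal for w*, the
   optimal paths and zero tolls of t* stay optimal, resp. zero, at t; so the segment
   from t through t* extends slightly beyond t* with f still affine on it, and the
   face property puts t in T.  The inclusion of T in T(W(T)) is LP duality, and for
   empty T the set W(T) contains the vector -1, for which the dual is unbounded. *)

Lemma exists_small_step (R : realFieldType) (I : finType) (P : I -> Prop) (al be : I -> R) :
  (forall j, P j -> 0 <= al j) -> (forall j, P j -> al j = 0 -> be j <= 0) ->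
  exists2 e, 0 < e & forall e' j, 0 <= e' <= e -> P j -> e' * be j <= al j.
Proof.
move=> al_ge0 al0_be.
have be1_gt0 j : 0 < `|be j| + 1 by rewrite ltr_wpDl.
pose e := \big[Order.min/1]_(j | `[< P j >] && (0 < al j)) (al j / (`|be j| + 1)).
exists e => [|e' j /andP [e'_ge0 e'_le] Pj].
  by apply/bigmin_gtP; split=> // j /andP [_ alj]; rewrite divr_gt0.
have := al_ge0 j Pj; rewrite le_eqVlt => /orP [/eqP al0 | alj].
  by rewrite -al0 mulr_ge0_le0 // al0_be.
have e_le : e <= al j / (`|be j| + 1).
  by apply: bigmin_le_cond; rewrite alj andbT; apply/asboolP.
apply: (le_trans (y := e' * (`|be j| + 1))).
  by rewrite ler_wpM2l // (le_trans (ler_norm _)) // lerDl.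
by rewrite -ler_pdivlMr //; apply: le_trans e'_le e_le.
Qed.

Lemma subset_of_card_sum_le (T1 T2 : finType) (A A' B : {set T1}) (C C' D : {set T2}) :
  A' \subset A :&: B -> C' \subset C :&: D -> (#|A| + #|C| <= #|A'| + #|C'|)%N ->
  A \subset B /\ C \subset D.
Proof.
move=> sA' sC' le_card.
have := subset_leq_card sA'; have := subset_leq_card sC'.
have := subset_leq_card (subsetIl A B); have := subset_leq_card (subsetIl C D).
move=> cCD cAB cC' cA'.
by split; apply/finset.setIidPl/eqP; rewrite eqEcard subsetIl /=; lia.
Qed.

Section NetworkPricing.
Variables (R : realType) (V A : finType) (ends : A -> V * V) (c : A -> R)
  (A1 : {set A}) (o d : V).
Hypothesis c_ge0 : forall a, 0 <= c a.
Local Notation n := #|A1|.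
Local Notation walk := (walk ends).
Local Notation src := (src ends).
Local Notation tgt := (tgt ends).
Local Notation incid := (@incid R V A ends).
Local Notation bvec := (@bvec R V o d).
Local Notation ext := (@ext R A A1).
Local Notation tarc := (@tarc A A1).
Local Notation restr := (@restr R A A1).
Local Notation dotn := (@dotn R A A1).
Local Notation Xset := (@Xset R V A ends o d).
Local Notation dual_feas := (@dual_feas R V A ends c A1).
Local Notation primal_feas := (@primal_feas R V A ends A1 o d).
Local Notation fval := (@fval R V A ends c A1 o d).
Local Notation epi_negf := (@epi_negf R V A ends c A1 o d).
Local Notation Wof := (@Wof R V A ends c A1 o d).
Local Notation Tof := (@Tof R V A ends c A1 o d).

Lemma walk_suffix u p1 p2 v : walk u (p1 ++ p2) v -> exists m, walk m p2 v.
Proof.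
elim: p1 u => [|a p1 IH] u /=; first by exists u.
by case/andP=> _ /IH.
Qed.

Lemma walk_uniq u p v : walk u p v ->
  exists q, [/\ uniq q, walk u q v & {subset q <= p}].
Proof.
elim: p u => [|a p IH] u /=; first by exists [::].
case/andP=> /eqP src_a /IH [q [uq wq sq]].
case: (boolP (a \in q)) => aq.
  case/splitPr: aq uq wq sq => q1 q2 uq wq sq.
  have [m /= /andP [_ w2]] := walk_suffix wq.
  exists (a :: q2); split=> /=.
  - by move: uq; rewrite cat_uniq => /and3P [_ _].
  - by rewrite src_a eqxx.
  - move=> x; rewrite inE => /predU1P [-> | xq2]; first exact: mem_head.
    by rewrite inE sq ?orbT // mem_cat inE xq2 !orbT.
exists (a :: q); split=> /=.
- by rewrite aq.
- by rewrite src_a eqxx.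
- by move=> x; rewrite !inE => /predU1P [->|/sq ->]; rewrite ?eqxx ?orbT.
Qed.

Lemma walk_incid_sum u p v i : walk u p v ->
  \sum_(a <- p) incid i a = (i == u)%:R - (i == v)%:R.
Proof.
elim: p u => [|a p IH] u /=; first by move=> /eqP ->; rewrite big_nil subrr.
case/andP=> /eqP src_a w; rewrite big_cons (IH _ w) /Defs.incid src_a.
by rewrite [_ == i]eq_sym [tgt a == i]eq_sym addrA subrK.
Qed.

Lemma sum_delta_mul (T : finType) (f : T -> R) j :
  \sum_i (j == i)%:R * f i = f j.
Proof.
rewrite (bigD1 j) //= eqxx mul1r big1 ?addr0 // => i.
by rewrite eq_sym => /negbTE ->; rewrite mul0r.
Qed.

Lemma incid_dot (y : V -> R) a : \sum_i incid i a * y i = y (src a) - y (tgt a).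
Proof.
by rewrite /Defs.incid; under eq_bigr do rewrite mulrBl; rewrite sumrB !sum_delta_mul.
Qed.

Lemma bvec_dot (y : V -> R) : \sum_i bvec i * y i = y o - y d.
Proof.
rewrite /bvec; under eq_bigr do rewrite mulrBl [_ == o]eq_sym [_ == d]eq_sym.
by rewrite sumrB !sum_delta_mul.
Qed.

Lemma dotnC (u v : 'rV[R]_n) : dotn u v = dotn v u.
Proof. by apply: eq_bigr => i _; rewrite mulrC. Qed.

Lemma dotnDr (t u v : 'rV[R]_n) : dotn t (u + v) = dotn t u + dotn t v.
Proof. by rewrite /Defs.dotn -big_split; apply: eq_bigr => i _; rewrite mxE mulrDr. Qed.

Lemma dotn_combl a b (t1 t2 w : 'rV[R]_n) :
  dotn (a *: t1 + b *: t2) w = a * dotn t1 w + b * dotn t2 w.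
Proof.
rewrite /Defs.dotn !mulr_sumr -big_split; apply: eq_bigr => i _; rewrite !mxE.
by rewrite mulrDl !mulrA.
Qed.

Lemma ler_dotn (t u v : 'rV[R]_n) : nonneg t -> (forall i, u 0 i <= v 0 i) ->
  dotn t u <= dotn t v.
Proof. by move=> t_ge0 le_uv; apply: ler_sum => i _; rewrite ler_wpM2l. Qed.

Lemma ext_ge0 t a : nonneg t -> 0 <= ext t a.
Proof. by move=> t_ge0; apply: sumr_ge0 => i _; apply: t_ge0. Qed.

Lemma dot_ext (t : 'rV[R]_n) x : \sum_a x a * ext t a = dotn t (restr x).
Proof.
rewrite /Defs.ext /Defs.dotn /Defs.restr.
under eq_bigr do rewrite mulr_sumr big_mkcond /=.
rewrite exchange_big /=; apply: eq_bigr => i _.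
rewrite mxE (bigD1 (tarc i)) //= eqxx big1 ?addr0; first by rewrite mulrC.
by move=> a /negbTE; rewrite eq_sym => ->.
Qed.

Definition cost (t : 'rV[R]_n) (x : A -> R) := dotA c x + dotn t (restr x).

Lemma costE t x : cost t x = \sum_a x a * (c a + ext t a).
Proof.
rewrite /cost -dot_ext /dotA -big_split /=; apply: eq_bigr => a _.
by rewrite mulrDr mulrC.
Qed.

Lemma costD t x1 x2 : cost t (fun a => x1 a + x2 a) = cost t x1 + cost t x2.
Proof. by rewrite !costE -big_split; apply: eq_bigr => a _; rewrite mulrDl. Qed.

Lemma cost_delta t a : cost t (fun b => (a == b)%:R) = c a + ext t a.
Proof. by rewrite costE sum_delta_mul. Qed.

Lemma ler_cost t x x' : nonneg t -> (forall a, x a <= x' a) -> cost t x <= cost t x'.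
Proof.
move=> t_ge0 le_x; rewrite !costE; apply: ler_sum => a _.
by rewrite ler_wpM2r // addr_ge0 // ext_ge0.
Qed.

Lemma cost_ge0 t x : nonneg t -> (forall a, 0 <= x a) -> 0 <= cost t x.
Proof.
move=> t_ge0 x_ge0; rewrite costE; apply: sumr_ge0 => a _.
by rewrite mulr_ge0 // addr_ge0 // ext_ge0.
Qed.

Lemma weak_duality t y x : dual_feas t y -> Xset x -> \sum_i bvec i * y i <= cost t x.
Proof.
move=> [y_feas _] [Nx x_ge0].
have -> : \sum_i bvec i * y i = \sum_a x a * (\sum_i incid i a * y i).
  under eq_bigr do rewrite -Nx mulr_suml.
  rewrite exchange_big; apply: eq_bigr => a _.
  by rewrite mulr_sumr; apply: eq_bigr => i _; rewrite mulrAC mulrC.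
rewrite costE; apply: ler_sum => a _; rewrite ler_wpM2l //.
by rewrite -lerBlDr.
Qed.

Definition ind (S : {set A}) (a : A) : R := (a \in S)%:R.

Definition spath u (S : {set A}) := exists q, [/\ uniq q, walk u q d & S = [set a in q]].

Definition pcost (S : {set A}) t := cost t (ind S).

(* [cost t 1] bounds every path cost; it is the value at nodes with no path to [d]. *)
Definition dist t u :=
  \big[Order.min/cost t (fun => 1)]_(S : {set A} | `[< spath u S >]) pcost S t.

Lemma ind_ge0 S a : 0 <= ind S a.
Proof. exact: ler0n. Qed.

Lemma pcost_le_all S t : nonneg t -> pcost S t <= cost t (fun => 1).
Proof. by move=> t_ge0; apply: ler_cost => // a; rewrite /ind lern1 leq_b1. Qed.

Lemma pcost_comb S a b t1 t2 : a + b = 1 ->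
  pcost S (a *: t1 + b *: t2) = a * pcost S t1 + b * pcost S t2.
Proof.
by move=> ab1; rewrite /pcost /cost dotn_combl -{1}[dotA c _]mul1r -ab1; ring.
Qed.

Lemma spath_of_walk u p : walk u p d ->
  exists2 S, spath u S & forall a, a \in S -> a \in p.
Proof.
case/walk_uniq => q [uq wq sq]; exists [set a in q]; first by exists q.
by move=> a; rewrite inE => /sq.
Qed.

Lemma spath_d : spath d finset.set0.
Proof. by exists [::]; split=> //=; apply/setP => a; rewrite !inE. Qed.

Lemma ind_spath_X S : spath o S -> Xset (ind S).
Proof.
case=> q [uq wq ->]; split=> [i|a]; last exact: ind_ge0.
rewrite /bvec -(walk_incid_sum i wq) [RHS]big_uniq // [RHS]big_mkcond /=.
by apply: eq_bigr => a _; rewrite /ind inE; case: (a \in q); rewrite ?mulr1 ?mulr0.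
Qed.

Lemma dist_le t u S : spath u S -> dist t u <= pcost S t.
Proof. by move=> uS; apply: bigmin_le_cond; apply/asboolP. Qed.

Lemma dist_attained t u S0 : nonneg t -> spath u S0 ->
  exists2 S, spath u S & dist t u = pcost S t.
Proof.
move=> t_ge0 uS0.
have [S] := eq_bigmin S0 (fun S => `[< spath u S >]) (pcost^~ t) (asboolT uS0)
  (fun S _ => pcost_le_all S t_ge0).
by move=> /asboolP uS dist_S; exists S.
Qed.

Lemma dist_ge0 t u : nonneg t -> 0 <= dist t u.
Proof.
move=> t_ge0; apply/bigmin_geP; split=> [|S _]; apply: cost_ge0 => // a; exact: ind_ge0.
Qed.

Lemma dist_d t : nonneg t -> dist t d = 0.
Proof.
move=> t_ge0; apply/le_anti; rewrite dist_ge0 // andbT.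
apply: le_trans (dist_le t spath_d) _; rewrite /pcost costE big1 // => a _.
by rewrite /ind inE mul0r.
Qed.

Lemma dist_triangle t a : nonneg t ->
  dist t (src a) <= (c a + ext t a) + dist t (tgt a).
Proof.
move=> t_ge0; have [[S0 S0_path]|no_path] := pselect (exists S, spath (tgt a) S).
  have [S [q [uq wq ->]] ->] := dist_attained t_ge0 S0_path.
  have [S' S'_path sub] : exists2 S', spath (src a) S' & forall b, b \in S' -> b \in a :: q.
    by apply: spath_of_walk; rewrite /= eqxx.
  apply: le_trans (dist_le t S'_path) _.
  rewrite -cost_delta /pcost -costD; apply: ler_cost => // b.
  rewrite /ind inE -natrD ler_nat; have := sub b; rewrite inE [b == a]eq_sym.
  by case: (b \in S'); case: (a == b); case: (b \in q) => // /(_ isT).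
have -> : dist t (tgt a) = cost t (fun => 1).
  by apply: bigmin_eq_id => S /asboolP path_S; case: no_path; exists S.
by rewrite ler_wpDl ?addr_ge0 ?ext_ge0 // /dist bigmin_le_id.
Qed.

Lemma dist_dual_feas t : nonneg t -> dual_feas t (dist t).
Proof.
move=> t_ge0; split=> // a; rewrite incid_dot.
by have := dist_triangle a t_ge0; lra.
Qed.

Lemma comb_vertical l (t : 'rV[R]_n) z1 z2 :
  comb l (t, z1) (t, z2) = (t, l * z1 + (1 - l) * z2).
Proof. by rewrite /comb /= -scalerDl addrC subrK scale1r. Qed.

Lemma aff_mem (F : set ('rV[R]_n * R)) p : F p -> aff F p.
Proof.
move=> Fp; exists 1%N, (fun => p), (fun => 1); split=> //; first by rewrite big_ord1.
by rewrite !big_ord1 scale1r mul1r; case: p {Fp}.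
Qed.

Lemma aff_dir_vertical (F : set ('rV[R]_n * R)) t z1 z2 :
  F (t, z1) -> F (t, z2) -> z1 < z2 -> aff_dir F (0, 1).
Proof.
move=> Fz1 Fz2 lt_z; set m := (z2 - z1)^-1.
have m_def : m * (z2 - z1) = 1 by rewrite mulVf // subr_eq0 gt_eqF.
have aff_top : aff F (t, z1 + 1).
  exists 2%N, (fun i : 'I_2 => if i == ord0 then (t, z1) else (t, z2)).
  exists (fun i : 'I_2 => if i == ord0 then 1 - m else m).
  split=> [i||]; first by case: ifP.
    by rewrite !big_ord_recl big_ord0 /= addr0 subrK.
  rewrite !big_ord_recl !big_ord0 /= !addr0 -scalerDl subrK scale1r.
  by congr (_, _); lra.
exists (t, z1 + 1), (t, z1); split=> //; first exact: aff_mem.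
by rewrite subrr addrC addKr.
Qed.

Lemma Tof_unbounded t : (0 < n)%N -> ~ Tof (const_mx (-1)) t.
Proof.
move=> n_gt0 [y [[y_feas t_ge0] y_opt]].
pose t1 := t + const_mx 1.
have t1_feas : dual_feas t1 y.
  split=> [a|i]; last by rewrite !mxE addr_ge0.
  apply: le_trans (y_feas a); rewrite lerB // ler_sum // => i _.
  by rewrite !mxE lerDl.
have := y_opt _ _ t1_feas; rewrite /t1 dotnDr.
have -> : dotn (const_mx (-1)) (const_mx 1) = - n%:R.
  rewrite /Defs.dotn (eq_bigr (fun => -1)) => [|i _]; last by rewrite !mxE mulr1.
  by rewrite sumrN sumr_const card_ord.
have : (0 : R) < n%:R by rewrite ltr0n.
lra.
Qed.

Section Shortest.
Hypothesis toll_free : toll_free_path ends A1 o d.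

Definition shortest t := dist t o.

Lemma shortest_attained t : nonneg t -> exists2 S, spath o S & shortest t = pcost S t.
Proof.
move=> t_ge0; case: toll_free => p [_ /spath_of_walk [S0 S0_path _]].
exact: dist_attained S0_path.
Qed.

Lemma shortest_le t S : spath o S -> shortest t <= pcost S t.
Proof. exact: dist_le. Qed.

Lemma dual_obj_dist t : nonneg t -> \sum_i bvec i * dist t i = shortest t.
Proof. by move=> t_ge0; rewrite bvec_dot dist_d // subr0. Qed.

Lemma shortest_le_cost t x : nonneg t -> Xset x -> shortest t <= cost t x.
Proof.
by move=> t_ge0 Xx; rewrite -dual_obj_dist //; apply: weak_duality (dist_dual_feas _) Xx.
Qed.

Lemma dual_obj_le_shortest t y : dual_feas t y -> \sum_i bvec i * y i <= shortest t.
Proof.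
move=> yfeas; have [S S_path ->] := shortest_attained yfeas.2.
exact: weak_duality yfeas (ind_spath_X S_path).
Qed.

Lemma fvalE t : nonneg t -> fval t = (shortest t)%:E.
Proof.
move=> t_ge0; rewrite /fval asboolT //; apply/le_anti/andP; split.
  apply: ge_ereal_inf; have [S S_path ->] := shortest_attained t_ge0.
  by exists (pcost S t)%:E => //; exists (ind S) => //; apply: ind_spath_X.
by apply/ereal_infP => _ [x Xx <-]; rewrite lee_fin shortest_le_cost.
Qed.

Lemma epi_negfP t z : epi_negf (t, z) <-> nonneg t /\ - shortest t <= z.
Proof.
rewrite /epi_negf /=; have [t_ge0|t_ge0] := pselect (nonneg t).
  by rewrite fvalE // -EFinN lee_fin; split=> [|[]].
by rewrite /fval asboolF //; split=> // -[].
Qed.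

Lemma Wof_Tof t w : nonneg t -> Wof t w -> Tof w t.
Proof.
move=> t_ge0 [x [[Xx le_xw w_ge0] x_opt]].
exists (dist t); split=> [|t' y' y'_feas]; first exact: dist_dual_feas.
have [S S_path gS] := shortest_attained t_ge0.
have S_feas : primal_feas (restr (ind S)) (ind S).
  by split=> [|i|i]; rewrite ?mxE ?ind_ge0 //; apply: ind_spath_X.
have := x_opt _ _ S_feas; have := weak_duality y'_feas Xx.
have : dotn t' (restr x) <= dotn t' w by apply: ler_dotn y'_feas.2 _ => i; rewrite mxE.
rewrite dual_obj_dist // (dotnC w t') (dotnC w t) gS /pcost /cost.
lra.
Qed.

Definition optpaths t :=
  [set S : {set A} | `[< spath o S >] && (pcost S t == shortest t)]%SET.
Definition zero_tolls (t : 'rV[R]_n) := [set i : 'I_n | t 0 i == 0]%SET.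

Lemma optpathsP S t : reflect (spath o S /\ pcost S t = shortest t) (S \in optpaths t).
Proof.
rewrite inE; apply: (iffP andP) => [[/asboolP ? /eqP ?]|[? ->]] //.
by split=> //; apply/asboolP.
Qed.

Lemma optpaths_comb l t1 t2 : nonneg t1 -> nonneg t2 -> 0 < l < 1 ->
  shortest (l *: t1 + (1 - l) *: t2) = l * shortest t1 + (1 - l) * shortest t2 ->
  optpaths (l *: t1 + (1 - l) *: t2) \subset optpaths t1 :&: optpaths t2.
Proof.
move=> t1_ge0 t2_ge0 /andP [l_gt0 l_lt1] g_comb; apply/fintype.subsetP => S.
move=> /optpathsP [S_path]; rewrite pcost_comb ?g_comb; last by rewrite addrC subrK.
have := shortest_le t1 S_path; have := shortest_le t2 S_path => le2 le1 g_S.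
by rewrite inE; apply/andP; split; apply/optpathsP; split=> //; nra.
Qed.

Lemma zero_tolls_comb l t1 t2 : nonneg t1 -> nonneg t2 -> 0 < l < 1 ->
  zero_tolls (l *: t1 + (1 - l) *: t2) \subset zero_tolls t1 :&: zero_tolls t2.
Proof.
move=> t1_ge0 t2_ge0 /andP [l_gt0 l_lt1]; apply/fintype.subsetP => i.
rewrite !inE !mxE => /eqP t_i0; have := t1_ge0 i; have := t2_ge0 i => ge2 ge1.
by apply/andP; split; apply/eqP; nra.
Qed.

Lemma optpaths_gt0 t : nonneg t -> (0 < #|optpaths t|)%N.
Proof.
move=> t_ge0; have [S S_path gS] := shortest_attained t_ge0.
by apply/card_gt0P; exists S; apply/optpathsP.
Qed.

Definition extrapolate e (ts t : 'rV[R]_n) := (1 + e) *: ts + (- e) *: t.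

Lemma shortest_extrapolate ts t : nonneg ts -> nonneg t ->
  optpaths ts \subset optpaths t -> zero_tolls ts \subset zero_tolls t ->
  exists2 e, 0 < e & nonneg (extrapolate e ts t) /\
    shortest (extrapolate e ts t) = (1 + e) * shortest ts - e * shortest t.
Proof.
move=> ts_ge0 t_ge0 sub_opt sub_zero.
have tolls_stay0 i : True -> ts 0 i = 0 -> t 0 i - ts 0 i <= 0.
  move=> _ tsi0; have := fintype.subsetP sub_zero i; rewrite !inE tsi0 eqxx.
  by move=> /(_ isT) /eqP ->; rewrite subrr.
have gap_ge0 S : spath o S -> 0 <= pcost S ts - shortest ts.
  by move=> /(shortest_le ts); rewrite subr_ge0.
have paths_stay_opt S : spath o S -> pcost S ts - shortest ts = 0 ->
    pcost S t - shortest t <= 0.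
  move=> S_path /eqP; rewrite subr_eq0 => /eqP gS.
  have S_opt : S \in optpaths ts by apply/optpathsP.
  by have /optpathsP [_ ->] := fintype.subsetP sub_opt S S_opt; rewrite subrr.
have [e1 e1_gt0 e1P] := exists_small_step (fun i _ => ts_ge0 i) tolls_stay0.
have [e2 e2_gt0 e2P] := exists_small_step gap_ge0 paths_stay_opt.
set e := Order.min e1 e2.
have e_ge0 : 0 <= e by rewrite /e le_min !ltW.
have e_le1 : 0 <= e <= e1 by rewrite e_ge0 /e ge_min lexx.
have e_le2 : 0 <= e <= e2 by rewrite e_ge0 /e ge_min lexx orbT.
have u_ge0 : nonneg (extrapolate e ts t).
  by move=> i; rewrite !mxE; have := e1P _ i e_le1 I; nra.
have ab1 : 1 + e + - e = 1 by ring.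
exists e; first by rewrite lt_min e1_gt0.
split=> //; apply/le_anti/andP; split.
  have [S0 S0_opt] := card_gt0P (optpaths_gt0 ts_ge0).
  have /optpathsP [S0_path gS0] := S0_opt.
  have /optpathsP [_ gtS0] := fintype.subsetP sub_opt _ S0_opt.
  by apply: le_trans (shortest_le _ S0_path) _; rewrite pcost_comb // gS0 gtS0 mulNr.
have [S S_path ->] := shortest_attained u_ge0.
rewrite pcost_comb //; have := e2P _ _ e_le2 S_path; have := shortest_le ts S_path.
nra.
Qed.

Section AverageFlow.
Variable ts : 'rV[R]_n.
Hypothesis ts_ge0 : nonneg ts.

Definition avg_flow (a : A) : R :=
  #|optpaths ts|%:R^-1 * \sum_(S in optpaths ts) ind S a.
Definition zero_ind : 'rV[R]_n := \row_i (i \in zero_tolls ts)%:R.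
Definition wstar : 'rV[R]_n := restr avg_flow + zero_ind.

Lemma mean_const (v : R) : #|optpaths ts|%:R^-1 * \sum_(S in optpaths ts) v = v.
Proof.
rewrite sumr_const -[v *+ _]mulr_natl mulrA mulVf ?mul1r //.
by rewrite pnatr_eq0 -lt0n optpaths_gt0.
Qed.

Lemma cost_avg_flow t :
  cost t avg_flow = #|optpaths ts|%:R^-1 * \sum_(S in optpaths ts) pcost S t.
Proof.
rewrite costE mulr_sumr /pcost.
under [RHS]eq_bigr do rewrite costE mulr_sumr.
rewrite [RHS]exchange_big /=; apply: eq_bigr => a _.
rewrite /avg_flow -mulrA mulr_suml mulr_sumr; apply: eq_bigr => S _.
by rewrite mulrA.
Qed.

Lemma avg_flow_X : Xset avg_flow.
Proof.
split=> [i|a]; last first.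
  by rewrite mulr_ge0 ?invr_ge0 ?ler0n ?sumr_ge0 // => S _; apply: ind_ge0.
rewrite -[RHS]mean_const /avg_flow.
under eq_bigr do rewrite mulrCA mulr_sumr.
rewrite -mulr_sumr exchange_big /=; congr (_ * _).
apply: eq_bigr => S /optpathsP [S_path _].
have [Nx _] := ind_spath_X S_path.
by rewrite -(Nx i); apply: eq_bigr => a _; rewrite mulrC.
Qed.

Lemma cost_avg_flow_opt t :
  optpaths ts \subset optpaths t -> cost t avg_flow = shortest t.
Proof.
move=> sub_opt; rewrite cost_avg_flow -[RHS]mean_const; congr (_ * _).
by apply: eq_bigr => S /(fintype.subsetP sub_opt) /optpathsP [].
Qed.

Lemma opt_cost_avg_flow t : nonneg t -> cost t avg_flow <= shortest t ->
  optpaths ts \subset optpaths t.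
Proof.
move=> t_ge0 le_cost; apply/fintype.subsetP => S S_opt.
have gap_ge0 S' : S' \in optpaths ts -> 0 <= pcost S' t - shortest t.
  by move=> /optpathsP [S'_path _]; rewrite subr_ge0 shortest_le.
have gaps0 : \sum_(S' in optpaths ts) (pcost S' t - shortest t) = 0.
  apply/le_anti; rewrite sumr_ge0 // andbT sumrB subr_le0.
  have k_gt0 : 0 < #|optpaths ts|%:R^-1 :> R by rewrite invr_gt0 ltr0n optpaths_gt0.
  by rewrite -(ler_pM2l k_gt0) -cost_avg_flow mean_const.
have /optpathsP [S_path _] := S_opt.
apply/optpathsP; split=> //; apply/eqP; rewrite -subr_eq0.
exact/eqP/(psumr_eq0P gap_ge0).
Qed.

Lemma dot_zero_ind_ge0 t : nonneg t -> 0 <= dotn t zero_ind.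
Proof. by move=> t_ge0; apply: sumr_ge0 => i _; rewrite mxE mulr_ge0 ?ler0n. Qed.

Lemma dot_zero_ind t : zero_tolls ts \subset zero_tolls t -> dotn t zero_ind = 0.
Proof.
move=> sub_zero; rewrite /Defs.dotn big1 // => i _; rewrite mxE.
case: (boolP (i \in zero_tolls ts)) => [/(fintype.subsetP sub_zero)|_]; last first.
  by rewrite mulr0.
by rewrite inE => /eqP ->; rewrite mul0r.
Qed.

Lemma zero_tolls_dot t : nonneg t -> dotn t zero_ind <= 0 ->
  zero_tolls ts \subset zero_tolls t.
Proof.
move=> t_ge0 le_dot; apply/fintype.subsetP => i i_zero.
have terms_ge0 j : xpredT j -> 0 <= t 0 j * zero_ind 0 j by rewrite mxE mulr_ge0 ?ler0n.
have dot0 : dotn t zero_ind = 0 by apply/le_anti; rewrite le_dot dot_zero_ind_ge0.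
by have := @psumr_eq0P _ _ _ _ terms_ge0 dot0 i isT; rewrite mxE i_zero mulr1 inE => ->.
Qed.

Lemma wstar_Wof t : nonneg t -> optpaths ts \subset optpaths t ->
  zero_tolls ts \subset zero_tolls t -> Wof t wstar.
Proof.
move=> t_ge0 sub_opt sub_zero; exists avg_flow; split.
  split=> [|i|i]; first exact: avg_flow_X.
    by rewrite !mxE lerDl ler0n.
  by rewrite !mxE addr_ge0 ?ler0n //; apply: avg_flow_X.2.
move=> w' x' [Xx' le_x'w' _].
rewrite /wstar dotnDr dot_zero_ind // addr0.
have -> : dotA c avg_flow + dotn t (restr avg_flow) = shortest t.
  exact: cost_avg_flow_opt.
apply: le_trans (shortest_le_cost t_ge0 Xx') _.
by rewrite /cost lerD2l; apply: ler_dotn => // i; rewrite mxE.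
Qed.

Lemma Tof_wstar t : Tof wstar t ->
  [/\ nonneg t, optpaths ts \subset optpaths t & zero_tolls ts \subset zero_tolls t].
Proof.
move=> [y [[y_feas t_ge0] y_opt]].
have := y_opt ts (dist ts) (dist_dual_feas ts_ge0).
have := dual_obj_le_shortest (conj y_feas t_ge0).
rewrite dual_obj_dist // !(dotnC wstar) /wstar !dotnDr (dot_zero_ind (subxx _)) addr0.
have := cost_avg_flow_opt (subxx (optpaths ts)).
have := shortest_le_cost t_ge0 avg_flow_X; have := dot_zero_ind_ge0 t_ge0.
rewrite /cost => zero_ge0 le_cost cost_ts le_y le_opt.
split=> //; [apply: opt_cost_avg_flow | apply: zero_tolls_dot] => //.
all: by rewrite /cost; lra.
Qed.

End AverageFlow.

Section Face.
Variable F : set ('rV[R]_n * R).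
Hypotheses (faceF : face F epi_negf) (no_vert : ~ aff_dir F (0, 1)).

Definition face_proj := [set t | exists z, F (t, z)].

(* A point strictly above the graph is interior to a vertical segment of epi(-f). *)
Lemma face_graph t z : F (t, z) -> nonneg t /\ z = - shortest t.
Proof.
have [F_epi _ F_ext] := faceF; move=> Ftz.
have [t_ge0 le_z] := (epi_negfP t z).1 (F_epi _ Ftz).
split=> //; apply/eqP; rewrite eq_le le_z andbT leNgt; apply/negP => lt_z.
set l := (z + shortest t + 1)^-1.
have l_def : l * (z + shortest t + 1) = 1 by rewrite mulVf //; lra.
have l_gt0 : 0 < l by rewrite invr_gt0; lra.
have l_lt1 : l < 1 by rewrite invf_lt1; lra.
have epi_bot : epi_negf (t, - shortest t) by apply/epi_negfP.
have epi_top : epi_negf (t, z + 1) by apply/epi_negfP; split=> //; lra.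
have F_mid : F (comb l (t, - shortest t) (t, z + 1)).
  rewrite comb_vertical; suff -> : l * - shortest t + (1 - l) * (z + 1) = z by [].
  lra.
have [Fbot _] := F_ext _ _ l epi_bot epi_top (introT andP (conj l_gt0 l_lt1)) F_mid.
exact: no_vert (aff_dir_vertical Fbot Ftz lt_z).
Qed.

Lemma face_proj_graph t : face_proj t -> F (t, - shortest t).
Proof. by case=> z Ftz; have [_ <-] := face_graph Ftz. Qed.

Lemma face_proj_nonneg t : face_proj t -> nonneg t.
Proof. by case=> z /face_graph []. Qed.

Lemma face_proj_convex l t1 t2 : face_proj t1 -> face_proj t2 -> 0 <= l <= 1 ->
  face_proj (l *: t1 + (1 - l) *: t2) /\
  shortest (l *: t1 + (1 - l) *: t2) = l * shortest t1 + (1 - l) * shortest t2.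
Proof.
move=> Tt1 Tt2 l01; have [_ F_conv _] := faceF.
have := F_conv _ _ l (face_proj_graph Tt1) (face_proj_graph Tt2) l01.
move=> /[dup] F_comb /face_graph [_ g_comb]; split; first by eexists; apply: F_comb.
by rewrite /= in g_comb; lra.
Qed.

Lemma face_proj_extend ts t : face_proj ts -> nonneg t ->
  optpaths ts \subset optpaths t -> zero_tolls ts \subset zero_tolls t -> face_proj t.
Proof.
move=> Tts t_ge0 sub_opt sub_zero; have [F_epi _ F_ext] := faceF.
have [e e_gt0 [u_ge0 g_u]] :=
  shortest_extrapolate (face_proj_nonneg Tts) t_ge0 sub_opt sub_zero.
set u := extrapolate e ts t in u_ge0 g_u.
set l := (1 + e)^-1.
have e1_neq0 : 1 + e != 0 by rewrite gt_eqF //; lra.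
have l_gt0 : 0 < l by rewrite invr_gt0; lra.
have l_lt1 : l < 1 by rewrite invf_lt1; lra.
have ts_comb : comb l (u, - shortest u) (t, - shortest t) = (ts, - shortest ts).
  rewrite /comb /u /extrapolate g_u /=; congr (_, _); last by rewrite /l; field.
  by apply/rowP => i; rewrite !mxE /l; field.
have epi_u : epi_negf (u, - shortest u) by apply/epi_negfP.
have epi_t : epi_negf (t, - shortest t) by apply/epi_negfP.
have F_ts : F (comb l (u, - shortest u) (t, - shortest t)).
  by rewrite ts_comb; apply: face_proj_graph.
have [_ Ft] := F_ext _ _ l epi_u epi_t (introT andP (conj l_gt0 l_lt1)) F_ts.
by exists (- shortest t).
Qed.

(* The midpoint of t* and any t in T has at most the optimal paths and the zero
   tolls of both, so minimality of t* forces inclusion. *)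
Lemma relint_point : (exists t0, face_proj t0) -> exists2 ts, face_proj ts &
  forall t, face_proj t ->
    optpaths ts \subset optpaths t /\ zero_tolls ts \subset zero_tolls t.
Proof.
move=> [t0 Tt0].
pose deg t := (#|optpaths t| + #|zero_tolls t|)%N.
have ex_deg : exists m, `[< exists2 t, face_proj t & deg t = m >].
  by exists (deg t0); apply/asboolP; exists t0.
case: (ex_minnP ex_deg) => m /asboolP [ts Tts deg_ts] deg_min.
exists ts => // t Tt.
have half01 : 0 <= (1 / 2 : R) <= 1 by apply/andP; split; lra.
have half_in : 0 < (1 / 2 : R) < 1 by apply/andP; split; lra.
have [Tmid g_mid] := face_proj_convex Tts Tt half01.
have ts_ge0 := face_proj_nonneg Tts; have t_ge0 := face_proj_nonneg Tt.
apply: subset_of_card_sum_le (optpaths_comb ts_ge0 t_ge0 half_in g_mid)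
  (zero_tolls_comb ts_ge0 t_ge0 half_in) _.
rewrite -[X in (X <= _)%N]/(deg ts) deg_ts; apply: deg_min; apply/asboolP.
by exists (1 / 2 *: ts + (1 - 1 / 2) *: t).
Qed.

End Face.

End Shortest.
End NetworkPricing.

Theorem proposition3 (R : realType) (V A : finType) (ends : A -> V * V)
  (c : A -> R) (A1 : {set A}) (o d : V) (T : set 'rV[R]_#|A1|) :
  injective ends ->
  (forall a, 0 <= c a) ->
  A1 != finset.set0 -> A1 \proper finset.setTfor A ->
  o != d ->
  toll_free_path ends A1 o d ->
  @action_set R V A ends c A1 o d T ->
  @TofSet R V A ends c A1 o d (@WofSet R V A ends c A1 o d T) = T.
Proof.
move=> _ c_ge0 A1_neq0 _ _ toll_free [F [faceF no_vert ->]].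
have face_ge0 := face_proj_nonneg c_ge0 toll_free faceF no_vert.
apply/seteqP; split=> t; last first.
  by move=> Tt w Ww; apply: (Wof_Tof c_ge0 toll_free (face_ge0 _ Tt) (Ww t Tt)).
move=> TWt; have [[t0 Tt0]|T0] := pselect (exists t0, face_proj F t0); last first.
  have n_gt0 : (0 < #|A1|)%N by rewrite card_gt0.
  by case: (Tof_unbounded n_gt0 (TWt _ _)) => t' Tt'; case: T0; exists t'.
have [ts Tts ts_relint] := relint_point c_ge0 toll_free faceF no_vert (ex_intro _ t0 Tt0).
have ts_ge0 := face_ge0 _ Tts.
have W_ts : WofSet ends c o d (face_proj F) (wstar ends c o d ts).
  move=> t' Tt'; have [sub_opt sub_zero] := ts_relint t' Tt'.
  exact: (wstar_Wof c_ge0 toll_free ts_ge0 (face_ge0 _ Tt') sub_opt sub_zero).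
have [t_ge0 sub_opt sub_zero] := Tof_wstar c_ge0 toll_free ts_ge0 (TWt _ W_ts).
exact: (face_proj_extend c_ge0 toll_free faceF no_vert Tts t_ge0 sub_opt sub_zero).
Qed.
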